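(* Let $G$ be the loopless clique on $V=\{1,\dots,K\}$. For any sequence of loss functions $\ell_1,\dots,\ell_T$ with $\ell_t:V\to[0,1]$, the expected regret of the algorithm Exp3.G run with feedback graph $G$, exploration set $U=V$, and parameters $\eta=\sqrt{(\ln K)/(2T)}$ and $\gamma=2\eta$ is at most $5\sqrt{T\ln K}$.
   Context: The loopless clique on $V$ is the directed graph with edge set $\{(i,j):i,j\in V,\ i\ne j\}$ (no self-loops). For a directed graph $G=(V,E)$, $N^{\mathrm{in}}(i)=\{j:(j,i)\in E\}$, $N^{\mathrm{out}}(i)=\{j:(i,j)\in E\}$. Online learning with feedback graph $G$: the environment fixes in advance losses $\ell_t:V\to[0,1]$; on round $t$ the player draws $I_t$, incurs $\ell_t(I_t)$, and observes only $\{(j,\ell_t(j)):j\in N^{\mathrm{out}}(I_t)\}$. Expected regret: $\mathbb{E}[\sum_{t=1}^T\ell_t(I_t)]-\min_{i\in V}\sum_{t=1}^T\ell_t(i)$. Algorithm Exp3.G with parameters $G$, learning rate $\eta>0$, exploration set $U\subseteq V$, exploration rate $\gamma\in[0,1]$: let $u$ be uniform on $U$ and $q_1$ uniform on $V$. For $t=1,2,\dots$: $p_t=(1-\gamma)q_t+\gamma u$; draw $I_t\sim p_t$, play it and observe $\{(i,\ell_t(i)):i\in N^{\mathrm{out}}(I_t)\}$; set $\hat\ell_t(i)=\frac{\ell_t(i)}{P_t(i)}\mathbb{1}\{i\in N^{\mathrm{out}}(I_t)\}$ with $P_t(i)=\sum_{j\in N^{\mathrm{in}}(i)}p_t(j)$,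 and $q_{t+1}(i)=\frac{q_t(i)\exp(-\eta\hat\ell_t(i))}{\sum_{j}q_t(j)\exp(-\eta\hat\ell_t(j))}$. *)

From HB Require Import structures.
From mathcomp Require Import all_boot all_order all_algebra.
From mathcomp Require Import reals.
From mathcomp Require Import sequences exp.
Set Implicit Arguments. Unset Strict Implicit. Unset Printing Implicit Defensive.
Import Order.TTheory GRing.Theory Num.Theory.
Local Open Scope ring_scope.

Section Exp3G.
Variable R : realType.
Variable V : finType.

Definition loopless_clique (K : nat) : rel 'I_K := fun i j => i != j.

Definition N_in (E : rel V) (i : V) : {set V} := [set j | E j i].
Definition N_out (E : rel V) (i : V) : {set V} := [set j | E i j].

Definition unif (U : {set V}) : V -> R :=
  fun i => if i \in U then (#|U|%:R)^-1 else 0.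

Definition exp3g_p (U : {set V}) (gamma : R) (q : V -> R) : V -> R :=
  fun i => (1 - gamma) * q i + gamma * unif U i.

Definition obs_prob (E : rel V) (p : V -> R) (i : V) : R :=
  \sum_(j in N_in E i) p j.

Definition loss_est (E : rel V) (p : V -> R) (lt : V -> R) (It : V) : V -> R :=
  fun i => if i \in N_out E It then lt i / obs_prob E p i else 0.

Definition ew_update (eta : R) (q : V -> R) (lh : V -> R) : V -> R :=
  fun i => q i * expR (- eta * lh i) / \sum_j q j * expR (- eta * lh j).

(* Expected cumulative loss of Exp3.G over rounds t, t+1, ..., t+n-1 when its
   current weight distribution is q (losses fixed in advance: ell t i is the
   loss of action i at round t).  The expectation is over the draws
   I_t ~ p_t, computed exactly by summing over the finitely many histories. *)
Fixpoint exp3g_exp_loss (E : rel V) (eta : R) (U : {set V}) (gamma : R)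
    (ell : nat -> V -> R) (n t : nat) (q : V -> R) : R :=
  match n with
  | 0 => 0
  | n'.+1 =>
      let p := exp3g_p U gamma q in
      \sum_(i : V) p i *
        (ell t i +
         exp3g_exp_loss E eta U gamma ell n' t.+1
           (ew_update eta q (loss_est E p (ell t) i)))
  end.

Definition q_init : V -> R := fun _ => (#|V|%:R)^-1.

Definition cum_loss (ell : nat -> V -> R) (T : nat) (i : V) : R :=
  \sum_(t < T) ell t i.

End Exp3G.

From mathcomp Require Import all_boot all_order all_algebra.
From mathcomp Require Import functions reals normedtype.
From mathcomp Require Import sequences derive exp.
From mathcomp Require Import ring lra.
Import Order.TTheory GRing.Theory Num.Theory.
Import numFieldNormedType.Exports.
Local Open Scope ring_scope.

(* Track the potential -ln q_t(k) / eta of a fixed comparator k.  In one round,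
   the expected loss of p_t plus the expected drop of the potential is at most
   l_t(k) + gamma + 3 eta: mixing in uniform exploration costs at most gamma, the
   loss estimates are unbiased since on the loopless clique every arm except the
   one played is observed, and their second moments are bounded because
   exploration keeps every p_t(i) <= 1 - eta.  To apply a quadratic upper bound
   on exp(-x), which needs x >= -1, the estimates are shifted by the estimate of
   the most probable arm; exponential weights are invariant under such shifts.
   Summing over the rounds, the regret is at most ln K / eta + T (gamma + 3 eta)
   = 7 T eta = 7 sqrt(T ln K / 2) <= 5 sqrt(T ln K). *)

Section ExpBounds.
Context {R : realType}.
Implicit Types (a b x y : R) (p : {poly R}).

Lemma ln_le_subr1 y : 0 < y -> ln y <= y - 1.
Proof.
move=> y_gt0; have := @le_ln1Dx R (y - 1).
by rewrite addrCA subrr addr0; apply; lra.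
Qed.

Lemma poly_expR_MVT p a b : a <= b ->
  exists2 c, c \in `[a, b] &
    p.[b] * expR b - p.[a] * expR a = (p.[c] + p^`().[c]) * expR c * (b - a).
Proof.
move=> ab.
have D x : is_derive x 1 (horner p * expR) ((p.[x] + p^`().[x]) * expR x).
  have -> : (p.[x] + p^`().[x]) * expR x = p.[x] *: expR x + expR x *: p^`().[x].
    by rewrite /GRing.scale /= mulrDl [expR x * _]mulrC.
  exact: is_deriveM.
have [|c cab E] := @MVT_segment R _ _ a b ab (fun x _ => D x).
  by apply: derivable_within_continuous => x _; exact: (@ex_derive _ _ _ _ _ _ _ (D x)).
by exists c.
Qed.

Lemma expRN_le_quad x : 0 <= x -> expR (- x) <= 1 - x + x ^+ 2 / 2.
Proof.
move=> x_ge0.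
pose p : {poly R} := 1 - 'X + (2^-1 : R) *: 'X^2.
have pE y : p.[y] = 1 - y + y ^+ 2 / 2 by rewrite /p !hornerE /=; ring.
have p'E y : p^`().[y] = y - 1.
  by rewrite /p !(derivD, derivN, derivZ, derivC, derivX, derivXn) !hornerE /=; lra.
have [c _ E] := poly_expR_MVT p 0 x x_ge0.
have : 0 <= (p.[c] + p^`().[c]) * expR c * (x - 0).
  rewrite pE p'E (_ : 1 - c + c ^+ 2 / 2 + (c - 1) = c ^+ 2 / 2); last by ring.
  by rewrite subr0 mulr_ge0 // mulr_ge0 ?expR_ge0 // divr_ge0 ?sqr_ge0.
rewrite -E !pE expR0 [0 ^+ 2]expr2 mul0r => key.
by rewrite expRN -[_^-1]mul1r ler_pdivrMr ?expR_gt0 //; lra.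
Qed.

Lemma expRN_le_quad_neg x : -1 <= x -> x <= 0 -> expR (- x) <= 1 - x + x ^+ 2.
Proof.
move=> x_geN1 x_le0.
pose p : {poly R} := 1 - 'X + 'X^2.
have pE y : p.[y] = 1 - y + y ^+ 2 by rewrite /p !hornerE.
have p'E y : p^`().[y] = y *+ 2 - 1.
  by rewrite /p !(derivD, derivN, derivC, derivX, derivXn) !hornerE /=; lra.
have [c] := poly_expR_MVT p x 0 x_le0.
rewrite in_itv /= => /andP[xc c_le0] E.
have : 0 <= - ((p.[c] + p^`().[c]) * expR c * (0 - x)).
  rewrite pE p'E (_ : _ * (0 - x) = (c + c ^+ 2) * - x * expR c); last by ring.
  by rewrite oppr_ge0 mulr_le0_ge0 ?expR_ge0 //; nra.
rewrite -E !pE expR0 [0 ^+ 2]expr2 mul0r => key.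
by rewrite expRN -[_^-1]mul1r ler_pdivrMr ?expR_gt0 //; lra.
Qed.

Lemma expRN_shift_le (A B eta : R) : 0 <= A -> 0 <= B -> 0 <= eta -> eta * B <= 1 ->
  expR (- (eta * (A - B))) <= 1 - eta * (A - B) + eta ^+ 2 * (A ^+ 2 / 2 + B ^+ 2).
Proof.
move=> A_ge0 B_ge0 eta_ge0 etaB_le1.
have etaA_ge0 : 0 <= eta * A by rewrite mulr_ge0.
have sq_ge0 z : 0 <= eta ^+ 2 * z ^+ 2 by rewrite mulr_ge0 ?sqr_ge0.
have [BA|AB] := leP B A.
- have x_ge0 : 0 <= eta * (A - B) by rewrite mulr_ge0 // subr_ge0.
  apply: le_trans (expRN_le_quad _ x_ge0) _.
  rewrite lerD2l; have := sq_ge0 B; have : (eta * (A - B)) ^+ 2 <= eta ^+ 2 * A ^+ 2.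
    by rewrite -exprMn ler_sqr ?nnegrE ?mulr_ge0 ?subr_ge0 // ler_wpM2l // gerBl.
  lra.
- have x_geN1 : -1 <= eta * (A - B) by rewrite mulrBr; lra.
  have x_le0 : eta * (A - B) <= 0 by rewrite mulr_ge0_le0 // subr_le0 ltW.
  apply: le_trans (expRN_le_quad_neg _ x_geN1 x_le0) _.
  rewrite lerD2l; have := sq_ge0 A; have : (eta * (A - B)) ^+ 2 <= eta ^+ 2 * B ^+ 2.
    have BA_ge0 : 0 <= B - A by rewrite subr_ge0 ltW.
    rewrite -exprMn -sqrrN -mulrN opprB.
    by rewrite ler_sqr ?nnegrE ?mulr_ge0 // ler_wpM2l // gerBl.
  lra.
Qed.

End ExpBounds.

Section ExpWeights.
Context {R : realType} {V : finType}.
Variables (eta : R) (q : V -> R).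
Hypothesis q_gt0 : forall i, 0 < q i.
Implicit Types (lh w : V -> R).

Lemma ew_normalizer_gt0 lh (k : V) : 0 < \sum_j q j * expR (- eta * lh j).
Proof.
rewrite (bigD1 k) //= ltr_pwDl ?mulr_gt0 ?expR_gt0 //.
by apply: sumr_ge0 => i _; rewrite mulr_ge0 ?expR_ge0 ?ltW.
Qed.

Lemma ew_update_gt0 lh i : 0 < ew_update eta q lh i.
Proof. by rewrite divr_gt0 ?ew_normalizer_gt0 ?mulr_gt0 ?expR_gt0. Qed.

Lemma ew_update_sum1 lh (k : V) : \sum_i ew_update eta q lh i = 1.
Proof. by rewrite -mulr_suml divff // gt_eqF // (ew_normalizer_gt0 _ k). Qed.

Lemma ew_updateBr lh (c : R) i :
  ew_update eta q (fun j => lh j - c) i = ew_update eta q lh i.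
Proof.
have eE j : expR (- eta * (lh j - c)) = expR (- eta * lh j) * expR (eta * c).
  by rewrite -expRD; congr expR; ring.
rewrite /ew_update eE; under eq_bigr => j _ do rewrite eE mulrA.
by rewrite -mulr_suml mulrA -mulf_div divff ?mulr1 // gt_eqF ?expR_gt0.
Qed.

Hypothesis q_sum1 : \sum_i q i = 1.

Lemma ew_potential_le lh w (k : V) : 0 < eta ->
    (forall i, expR (- eta * lh i) <= 1 - eta * lh i + eta ^+ 2 * w i) ->
  - ln (ew_update eta q lh k) / eta <=
    - ln (q k) / eta + lh k - \sum_i q i * lh i + eta * \sum_i q i * w i.
Proof.
move=> eta_gt0 expR_le.
set Z := \sum_j q j * expR (- eta * lh j).
set mean := \sum_i q i * lh i; set var := \sum_i q i * w i.
have Z_gt0 : 0 < Z := ew_normalizer_gt0 lh k.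
have lnE : ln (ew_update eta q lh k) = ln (q k) - eta * lh k - ln Z.
  by rewrite ln_div ?lnM ?expRK ?posrE ?mulr_gt0 ?expR_gt0 //; ring.
have Z_le : Z <= 1 - eta * mean + eta ^+ 2 * var.
  have -> : 1 - eta * mean + eta ^+ 2 * var =
      \sum_i q i * (1 - eta * lh i + eta ^+ 2 * w i).
    rewrite (eq_bigr (fun i => q i - eta * (q i * lh i) + eta ^+ 2 * (q i * w i)));
      last by move=> i _; ring.
    by rewrite !big_split /= sumrN -!mulr_sumr q_sum1.
  by apply: ler_sum => i _; rewrite ler_wpM2l ?(ltW (q_gt0 i)).
have lnZ_le : ln Z / eta <= - mean + eta * var.
  rewrite ler_pdivrMr // (_ : _ * eta = - eta * mean + eta ^+ 2 * var); last by ring.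
  by have := ln_le_subr1 _ Z_gt0; lra.
rewrite lnE (_ : - _ / eta = - ln (q k) / eta + lh k + ln Z / eta).
  by lra.
by field; rewrite gt_eqF.
Qed.

Lemma ew_potential_shift_le lh w (k : V) (c : R) : 0 < eta ->
    (forall i, expR (- (eta * (lh i - c))) <= 1 - eta * (lh i - c) + eta ^+ 2 * w i) ->
  - ln (ew_update eta q lh k) / eta <=
    - ln (q k) / eta + lh k - \sum_i q i * lh i + eta * \sum_i q i * w i.
Proof.
move=> eta_gt0 expR_le; rewrite -(ew_updateBr lh c).
have expR_le' i : expR (- eta * (lh i - c)) <= 1 - eta * (lh i - c) + eta ^+ 2 * w i.
  by rewrite mulNr.
have := ew_potential_le (fun i => lh i - c) w k eta_gt0 expR_le'.
have -> : \sum_i q i * (lh i - c) = \sum_i q i * lh i - c.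
  by rewrite (eq_bigr _ (fun i _ => mulrBr _ _ _)) sumrB -mulr_suml q_sum1 mul1r.
lra.
Qed.

End ExpWeights.

Section SumLemmas.
Context {R : realType} {V : finType}.

Lemma sum_mul_neq (p : V -> R) (i : V) (a : R) :
  \sum_j p j * (if j != i then a else 0) = (\sum_j p j - p i) * a.
Proof.
rewrite (bigD1 i) //= eqxx mulr0 add0r [in RHS](bigD1 i) //= addrAC subrr add0r.
by rewrite mulr_suml; apply: eq_bigr => j ->.
Qed.

Lemma sum_mul_exchange (p q : V -> R) (f : V -> V -> R) :
  \sum_I p I * \sum_i q i * f I i = \sum_i q i * \sum_I p I * f I i.
Proof.
under eq_bigr => I _ do rewrite mulr_sumr.
rewrite exchange_big /=; apply: eq_bigr => i _; rewrite mulr_sumr.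
by apply: eq_bigr => I _; rewrite mulrCA.
Qed.

End SumLemmas.

Section Exp3GDistribution.
Context {R : realType} {V : finType}.
Context {U : {set V}} {gamma : R} {q : V -> R}.
Hypothesis U_neq0 : U != set0.
Let p := exp3g_p U gamma q.

Lemma unif_ge0 i : 0 <= unif R U i.
Proof. by rewrite /unif; case: ifP => // _; rewrite invr_ge0. Qed.

Lemma sum_unif : \sum_i unif R U i = 1.
Proof.
rewrite -big_mkcond /= sumr_const -[_ *+ _]mulr_natr mulVf //.
by rewrite pnatr_eq0 cards_eq0.
Qed.

Lemma exp3g_p_ge0 i : 0 <= gamma <= 1 -> 0 <= q i -> 0 <= p i.
Proof.
by move=> /andP[g_ge0 g_le1] q_ge0; rewrite addr_ge0 ?mulr_ge0 ?unif_ge0 ?subr_ge0.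
Qed.

Lemma exp3g_p_sum1 : \sum_i q i = 1 -> \sum_i p i = 1.
Proof.
by move=> q_sum1; rewrite big_split /= -!mulr_sumr q_sum1 sum_unif !mulr1 subrK.
Qed.

Lemma exp3g_p_mean_le (l : V -> R) : 0 <= gamma -> (forall i, 0 <= q i) ->
    (forall i, 0 <= l i <= 1) ->
  \sum_i p i * l i - \sum_i q i * l i <= gamma.
Proof.
move=> g_ge0 q_ge0 l01.
have ql_ge0 : 0 <= \sum_i q i * l i.
  by apply: sumr_ge0 => i _; rewrite mulr_ge0 //; case/andP: (l01 i).
have ul_le1 : \sum_i unif R U i * l i <= 1.
  rewrite -sum_unif; apply: ler_sum => i _; rewrite ler_piMr ?unif_ge0 //.
  by case/andP: (l01 i).
have -> : \sum_i p i * l i =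
    (1 - gamma) * \sum_i q i * l i + gamma * \sum_i unif R U i * l i.
  by rewrite !mulr_sumr -big_split; apply: eq_bigr => i _; rewrite /p /exp3g_p /=; ring.
nra.
Qed.

End Exp3GDistribution.

Section Exp3GFullExploration.
Context {R : realType} {V : finType}.
Context {gamma : R} {q : V -> R}.
Hypotheses (V_gt1 : (1 < #|V|)%N) (g01 : 0 <= gamma <= 1).
Let p := exp3g_p [set: V] gamma q.

Lemma exp3g_pT i : p i = (1 - gamma) * q i + gamma / #|V|%:R.
Proof. by rewrite /p /exp3g_p /unif inE cardsT. Qed.

Let inv_card_le_half : 0 < (#|V|%:R : R)^-1 <= 2^-1.
Proof.
rewrite invr_gt0 ltr0n (ltn_trans _ V_gt1) //=.
by rewrite lef_pV2 ?posrE ?ltr0n ?(ltn_trans _ V_gt1) // ler_nat.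
Qed.

Lemma exp3g_pT_le i : q i <= 1 -> p i <= 1 - gamma / 2.
Proof. by rewrite exp3g_pT; case/andP: inv_card_le_half; case/andP: g01; nra. Qed.

Lemma exp3g_pT_compl i : 0 <= q i <= 1 -> 1 - q i <= 2 * (1 - p i).
Proof. by rewrite exp3g_pT; case/andP: inv_card_le_half; case/andP: g01; nra. Qed.

End Exp3GFullExploration.

Section LooplessClique.
Context {R : realType} {K : nat}.
Local Notation clique := (@loopless_clique K).

Lemma obs_prob_clique (p : 'I_K -> R) i : obs_prob clique p i = \sum_j p j - p i.
Proof.
rewrite /obs_prob /N_in [in RHS](bigD1 i) //= addrAC subrr add0r.
by apply: eq_bigl => j; rewrite inE.
Qed.

Lemma loss_est_clique (p l : 'I_K -> R) I i :
  loss_est clique p l I i = if I != i then l i / (\sum_j p j - p i) else 0.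
Proof. by rewrite /loss_est /N_out inE obs_prob_clique. Qed.

Variables (p l : 'I_K -> R).
Hypotheses (p_sum1 : \sum_i p i = 1) (p_lt1 : forall i, p i < 1).

Lemma loss_est_clique_mean i : \sum_I p I * loss_est clique p l I i = l i.
Proof.
under eq_bigr => I _ do rewrite loss_est_clique p_sum1.
by rewrite sum_mul_neq p_sum1 mulrC divfK // subr_eq0 gt_eqF.
Qed.

Lemma loss_est_clique_sqr_mean i :
  \sum_I p I * loss_est clique p l I i ^+ 2 = l i ^+ 2 / (1 - p i).
Proof.
under eq_bigr => I _ do rewrite loss_est_clique p_sum1 (fun_if (fun x => x ^+ 2)) expr0n.
by rewrite sum_mul_neq p_sum1; field; rewrite subr_eq0 gt_eqF.
Qed.

End LooplessClique.

Section CliqueRound.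
Context {R : realType} {K : nat} {eta gamma : R} {q l : 'I_K -> R}.
Hypotheses (K_gt1 : (1 < K)%N) (eta_gt0 : 0 < eta) (gammaE : gamma = 2 * eta)
  (gamma_le1 : gamma <= 1).
Hypotheses (q_gt0 : forall i, 0 < q i) (q_sum1 : \sum_i q i = 1)
  (l01 : forall i, 0 <= l i <= 1).
Local Notation clique := (@loopless_clique K).
Local Notation p := (exp3g_p [set: 'I_K] gamma q).
Local Notation lh := (loss_est clique p l).

Let card_gt1 : (1 < #|'I_K|)%N. Proof. by rewrite card_ord. Qed.
Let gamma01 : 0 <= gamma <= 1. Proof. by rewrite gamma_le1 gammaE mulr_ge0 ?ltW. Qed.
Let q01 i : 0 <= q i <= 1.
Proof.
rewrite ltW //= -q_sum1 (bigD1 i) //= lerDl.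
by apply: sumr_ge0 => j _; rewrite ltW.
Qed.
Let p_ge0 i : 0 <= p i. Proof. exact: exp3g_p_ge0 gamma01 (ltW (q_gt0 i)). Qed.
Let full_neq0 : [set: 'I_K] != set0.
Proof. by rewrite -card_gt0 cardsT (ltn_trans _ card_gt1). Qed.
Let p_sum1 : \sum_i p i = 1. Proof. exact: exp3g_p_sum1 full_neq0 q_sum1. Qed.
Let p_le i : p i <= 1 - eta.
Proof.
have := exp3g_pT_le card_gt1 gamma01 i (proj2 (andP (q01 i))).
by rewrite gammaE; lra.
Qed.
Let p_lt1 i : p i < 1. Proof. by rewrite (le_lt_trans (p_le i)) // gtrBl. Qed.

Lemma clique_variance_le s : (forall i, p i <= p s) ->
  \sum_I p I * \sum_i q i * (if i != s then lh I i ^+ 2 / 2 + lh I s ^+ 2 else 0)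
    <= 3.
Proof.
move=> s_max; set a := 1 + 1 / (1 - p s).
have ps_lt1 : 0 < 1 - p s by rewrite subr_gt0.
have sqr_le1 i : l i ^+ 2 <= 1.
  by case/andP: (l01 i) => l_ge0 l_le1; rewrite expr_le1.
have var_le i : i != s ->
    \sum_I p I * (lh I i ^+ 2 / 2 + lh I s ^+ 2) <= a.
  move=> neq_is.
  have -> : \sum_I p I * (lh I i ^+ 2 / 2 + lh I s ^+ 2) =
      (\sum_I p I * lh I i ^+ 2) / 2 + \sum_I p I * lh I s ^+ 2.
    by rewrite mulr_suml -big_split /=; apply: eq_bigr => I _; ring.
  rewrite !loss_est_clique_sqr_mean //.
  have pis_le1 : p i + p s <= 1.
    rewrite -p_sum1 (bigD1 i) //= lerD2l (bigD1 s) 1?eq_sym //= lerDl.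
    exact: sumr_ge0.
  have Mi_le2 : l i ^+ 2 / (1 - p i) <= 2.
    by rewrite ler_pdivrMr ?subr_gt0 //; have := s_max i; have := sqr_le1 i; lra.
  have Ms_le : l s ^+ 2 / (1 - p s) <= 1 / (1 - p s).
    by rewrite ler_wpM2r ?sqr_le1 // invr_ge0 ltW.
  rewrite /a; lra.
rewrite sum_mul_exchange.
apply: le_trans (_ : \sum_i q i * (if i != s then a else 0) <= _).
  apply: ler_sum => i _; rewrite ler_wpM2l ?(ltW (q_gt0 i)) //.
  case: ifP => [/var_le //|_]; rewrite big1 // => I _; exact: mulr0.
rewrite sum_mul_neq q_sum1 /a.
have ratio_le2 : (1 - q s) / (1 - p s) <= 2.
  rewrite ler_pdivrMr //.
  by have := exp3g_pT_compl card_gt1 gamma01 s (q01 s); lra.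
by rewrite mulrDr mulr1 mul1r; have := q_gt0 s; lra.
Qed.

Let lh_ge0 I i : 0 <= lh I i.
Proof.
rewrite loss_est_clique p_sum1; case: ifP => // _.
by rewrite divr_ge0 ?subr_ge0 ?(ltW (p_lt1 i)) //; case/andP: (l01 i).
Qed.

Let eta_lh_le1 I i : eta * lh I i <= 1.
Proof.
rewrite loss_est_clique p_sum1; case: ifP => _; last by rewrite mulr0.
rewrite mulrA ler_pdivrMr ?subr_gt0 // mul1r.
have := p_le i; have : eta * l i <= eta.
  by apply: ler_piMr; [exact: ltW | case/andP: (l01 i)].
lra.
Qed.

Lemma exp3g_clique_round_le (k : 'I_K) :
  \sum_I p I * (l I + - ln (ew_update eta q (lh I) k) / eta)
    <= l k + - ln (q k) / eta + (gamma + 3 * eta).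
Proof.
have [s _ s_max] := @arg_maxP _ _ 'I_K k xpredT p isT.
pose w I i := if i != s then lh I i ^+ 2 / 2 + lh I s ^+ 2 else 0.
have pot_le I : - ln (ew_update eta q (lh I) k) / eta <=
    - ln (q k) / eta + lh I k - \sum_i q i * lh I i + eta * \sum_i q i * w I i.
  apply: (@ew_potential_shift_le _ _ eta q q_gt0 q_sum1 (lh I) (w I) k (lh I s) eta_gt0) => i.
  rewrite /w; case: ifP => [_|/negbFE/eqP->]; last first.
    by rewrite subrr !mulr0 oppr0 expR0 !addr0.
  exact: expRN_shift_le (lh_ge0 I i) (lh_ge0 I s) (ltW eta_gt0) (eta_lh_le1 I s).
apply: le_trans (_ : \sum_I p I * (l I + (- ln (q k) / eta + lh I k
    - \sum_i q i * lh I i + eta * \sum_i q i * w I i)) <= _).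
  by apply: ler_sum => I _; rewrite ler_wpM2l // lerD2l.
rewrite (eq_bigr (fun I => p I * l I + - ln (q k) / eta * p I + p I * lh I k
    - p I * \sum_i q i * lh I i + eta * (p I * \sum_i q i * w I i)));
  last by move=> I _; ring.
rewrite !big_split /= sumrN -!mulr_sumr p_sum1 mulr1 loss_est_clique_mean //.
rewrite (_ : \sum_I p I * \sum_i q i * lh I i = \sum_i q i * l i); last first.
  rewrite sum_mul_exchange; apply: eq_bigr => i _; congr (_ * _).
  exact: loss_est_clique_mean.
have := exp3g_p_mean_le full_neq0 l (proj1 (andP gamma01)) (fun i => ltW (q_gt0 i)) l01.
have := clique_variance_le s (fun i => s_max i isT); rewrite -/w => var_le3.
have : eta * \sum_I p I * \sum_i q i * w I i <= eta * 3 by rewrite ler_wpM2l ?(ltW eta_gt0).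
lra.
Qed.

End CliqueRound.

Section Exp3GRegret.
Context {R : realType} {V : finType} {E : rel V} {eta : R} {U : {set V}} {gamma : R}.
Context {ell : nat -> V -> R} {T : nat} {k : V} {B : R}.
Hypotheses (eta_gt0 : 0 < eta) (gamma01 : 0 <= gamma <= 1) (U_neq0 : U != set0).
Hypothesis round_le : forall t q, (t < T)%N ->
  (forall i, 0 < q i) -> \sum_i q i = 1 ->
  \sum_I exp3g_p U gamma q I * (ell t I +
      - ln (ew_update eta q (loss_est E (exp3g_p U gamma q) (ell t) I) k) / eta)
    <= ell t k + - ln (q k) / eta + B.

Lemma exp3g_exp_loss_le n t q : (t + n <= T)%N ->
    (forall i, 0 < q i) -> \sum_i q i = 1 ->
  exp3g_exp_loss E eta U gamma ell n t q <=
    \sum_(s < n) ell (t + s)%N k + - ln (q k) / eta + n%:R * B.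
Proof.
elim: n t q => [|n IHn] t q tn_le q_gt0 q_sum1.
  rewrite /= big_ord0 mul0r add0r addr0; apply: divr_ge0; last exact: ltW.
  by rewrite oppr_ge0 ln_le0 // -q_sum1 (bigD1 k) //= lerDl sumr_ge0 // => i _; rewrite ltW.
set p := exp3g_p U gamma q; set S := \sum_(s < n) ell (t.+1 + s)%N k.
set q' := fun I => ew_update eta q (loss_est E p (ell t) I).
have loss_next_le I : exp3g_exp_loss E eta U gamma ell n t.+1 (q' I) <=
    S + - ln (q' I k) / eta + n%:R * B.
  apply: IHn => [|i|]; first by rewrite addSnnS.
    exact: ew_update_gt0.
  exact: (ew_update_sum1 eta q q_gt0 _ k).
have t_lt : (t < T)%N by apply: leq_trans tn_le; rewrite addnS ltnS leq_addr.
have /= := round_le _ _ t_lt q_gt0 q_sum1.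
rewrite -/p -/q' => round_t.
apply: le_trans (_ : \sum_I p I * (ell t I + - ln (q' I k) / eta + (S + n%:R * B)) <= _).
  apply: ler_sum => I _; rewrite ler_wpM2l ?exp3g_p_ge0 ?(ltW (q_gt0 I)) //.
  by move: (loss_next_le I); rewrite /q' /p; lra.
rewrite (eq_bigr _ (fun I _ => mulrDr _ _ _)) big_split /= -mulr_suml.
rewrite exp3g_p_sum1 // mul1r big_ord_recl addn0.
rewrite (_ : \sum_(s < n) _ = S); last first.
  by apply: eq_bigr => s _; rewrite lift0 addnS -addSn.
by rewrite -/S -[n.+1]addn1 natrD; move: round_t; rewrite -!addrA; lra.
Qed.

End Exp3GRegret.

Lemma q_init_gt0 {R : realType} {V : finType} (i : V) : 0 < q_init R i.
Proof. by rewrite invr_gt0 ltr0n; apply/card_gt0P; exists i. Qed.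

Lemma sum_q_init {R : realType} {V : finType} (k : V) : \sum_i @q_init R V i = 1.
Proof.
rewrite /q_init sumr_const -[_ *+ #|_|]mulr_natr mulVf // pnatr_eq0 -lt0n.
by apply/card_gt0P; exists k.
Qed.

Lemma sqrt_tuning_le {R : realType} {T L eta : R} : 0 < T -> 0 < eta ->
    eta ^+ 2 = L / (2 * T) ->
  L / eta + T * (2 * eta + 3 * eta) <= 5 * Num.sqrt (T * L).
Proof.
move=> T_gt0 eta_gt0 eta2.
have LE : L = 2 * T * eta ^+ 2 by rewrite eta2; field; rewrite gt_eqF.
have -> : L / eta + T * (2 * eta + 3 * eta) = 7 * (T * eta).
  by rewrite LE; field; rewrite gt_eqF.
have TL2 : Num.sqrt (T * L) ^+ 2 = 2 * (T * eta) ^+ 2.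
  by rewrite sqr_sqrtr LE; [ring | rewrite !mulr_ge0 ?sqr_ge0 ?ltW].
rewrite -(@ler_pXn2r _ 2) ?nnegrE ?mulr_ge0 ?sqrtr_ge0 ?(ltW T_gt0) ?(ltW eta_gt0) //.
by rewrite !exprMn TL2 exprMn; nra.
Qed.

Theorem theorem3 (R : realType) (K T : nat) (ell : nat -> 'I_K -> R) :
  (2 <= K)%N -> (0 < T)%N ->
  (* gamma = 2 eta must lie in [0,1] for Exp3.G to be defined *)
  2 * Num.sqrt (ln (K%:R : R) / (2 * T%:R)) <= 1 ->
  (forall t i, (t < T)%N -> 0 <= ell t i <= 1) ->
  let eta : R := Num.sqrt (ln (K%:R) / (2 * T%:R)) in
  let gamma := 2 * eta in
  forall i : 'I_K,
    exp3g_exp_loss (@loopless_clique K) eta [set: 'I_K] gamma ell T 0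
      (@q_init R _) - cum_loss ell T i
    <= 5 * Num.sqrt (T%:R * ln (K%:R)).
Proof.
move=> K_gt1 T_gt0 gamma_le1 ell01 eta gamma k.
have TR_gt0 : 0 < T%:R :> R by rewrite ltr0n.
have lnK_gt0 : 0 < ln (K%:R : R) by rewrite ln_gt0 // ltr1n.
have eta2 : eta ^+ 2 = ln (K%:R) / (2 * T%:R).
  by rewrite sqr_sqrtr // divr_ge0 ?mulr_ge0 ?ltW.
have eta_gt0 : 0 < eta by rewrite sqrtr_gt0 divr_gt0 ?mulr_gt0.
have gamma01 : 0 <= gamma <= 1 by rewrite gamma_le1 mulr_ge0 ?ltW.
have full_neq0 : [set: 'I_K] != set0 by apply/set0Pn; exists k.
have := exp3g_exp_loss_le eta_gt0 gamma01 full_neq0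
  (fun t q t_lt q_gt0 q_sum1 => exp3g_clique_round_le K_gt1 eta_gt0 erefl gamma_le1
     q_gt0 q_sum1 (ell01 t ^~ t_lt) k)
  T 0 _ (leqnn T) q_init_gt0 (sum_q_init k).
rewrite /q_init card_ord lnV ?posrE ?ltr0n ?(ltn_trans _ K_gt1) // opprK -/(cum_loss ell T k).
have := sqrt_tuning_le TR_gt0 eta_gt0 eta2.
rewrite mulrDr; lra.
Qed.
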